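(* For all $n\ge1$, $$B_n(q)=\sum_{w\in S_n}(-1)^{\ell(w)}q^{\beta(w)}=\prod_{k=1}^{n-1}(1-q^k)^{n-k}.$$
   Context: For $w\in S_n$, $\ell(w)=\#\{(i,j): i<j,\ w(i)>w(j)\}$ is the inversion number. The bigrassmannian statistic of $w$ is $\beta(w)=\sum_{i,j=1}^n\min(i,j)-\sum_{i,j=1}^n\widetilde w(i,j)$, where $\widetilde w(i,j)=\#\{p\le i : w(p)\le j\}$ is the corner sum matrix of the permutation matrix of $w$; equivalently $\beta(w)=\sum_{i=1}^n\frac12(i-w(i))^2$. *)

From HB Require Import structures.
From mathcomp Require Import all_boot all_order all_algebra all_fingroup.
Set Implicit Arguments. Unset Strict Implicit. Unset Printing Implicit Defensive.
Import GRing.Theory.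

(* Permutations of 'I_n = {0,...,n-1}; position/value i (0-based) stands for
   i.+1 in the paper's 1-based convention. *)

Definition inv_num n (w : 'S_n) : nat :=
  #|[set p : 'I_n * 'I_n | (p.1 < p.2) && (w p.2 < w p.1)]|.

Definition corner_sum n (w : 'S_n) (i j : 'I_n) : nat :=
  #|[set p : 'I_n | (p <= i) && (w p <= j)]|.

Definition beta_stat n (w : 'S_n) : nat :=
  (\sum_(i < n) \sum_(j < n) minn i.+1 j.+1
   - \sum_(i < n) \sum_(j < n) corner_sum w i j)%N.

From HB Require Import structures.
From mathcomp Require Import all_boot all_order all_algebra all_fingroup.
From mathcomp Require Import zify.
Import GRing.Theory Num.Theory.
Set Implicit Arguments. Unset Strict Implicit.

(* Up to a power of q, the signed generating function
     B_n(q) = \sum_w (-1)^l(w) q^beta(w)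
   is a Vandermonde determinant.  With 0-based positions and values,
     beta(w) + D = \sum_p (n - p) * w(p),   D := \sum_p p * (n - p),
   because the corner sums of w add up to \sum_p (n - p)(n - w p) and the
   minima in beta are the corner sums of the identity.  Hence q^D B_n(q) is
   the Leibniz expansion of det (x_j^i) at x_j = q^(n-j), once (-1)^l(w) is
   identified with the signature of w; this identification is read off the
   Vandermonde determinant at x_j = w(j), whose sign counts inversions.
   Finally \prod_(i<j) (q^(n-j) - q^(n-i)) = q^D \prod_(i<j) (1 - q^(j-i)),
   and grouping the pairs by k = j - i (which occurs n - k times) gives the
   product formula. *)

Lemma count_le (m n : nat) : \sum_(p < n) (p <= m : nat) = minn m.+1 n.
Proof.
elim: n => [|n IHn]; first by rewrite big_ord0 minn0.
by rewrite big_ord_recr /= IHn; case: leqP; lia.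
Qed.

Lemma count_ge (k n : nat) : \sum_(i < n) (k <= i : nat) = n - k.
Proof.
elim: n => [|n IHn]; first by rewrite big_ord0.
by rewrite big_ord_recr /= IHn; case: leqP; lia.
Qed.

Lemma corner_sumE n (w : 'S_n) (i j : 'I_n) :
  corner_sum w i j = \sum_(p < n) ((p <= i) && (w p <= j) : nat).
Proof.
rewrite /corner_sum cardsE -sum1_card big_mkcond; apply: eq_bigr => p _.
by rewrite unfold_in /=; case: (_ && _).
Qed.

Lemma corner_sum1 n (i j : 'I_n) : corner_sum 1%g i j = minn i.+1 j.+1.
Proof.
rewrite corner_sumE (eq_bigr (fun p : 'I_n => (p <= minn i j : nat))).
  by rewrite count_le; have := ltn_ord i; have := ltn_ord j; lia.
by move=> p _; rewrite perm1 leq_min.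
Qed.

(* Every corner sum is dominated by that of the identity, so the truncated
   subtraction defining beta is an honest difference. *)
Lemma corner_sum_le n (w : 'S_n) (i j : 'I_n) :
  corner_sum w i j <= corner_sum 1%g i j.
Proof.
rewrite corner_sum1 leq_min corner_sumE; apply/andP; split.
  apply: (@leq_trans (\sum_(p < n) (p <= i : nat))).
    by apply: leq_sum => p _; case: (p <= i); case: (w p <= j).
  by rewrite count_le geq_minl.
apply: (@leq_trans (\sum_(p < n) (w p <= j : nat))).
  by apply: leq_sum => p _; case: (p <= i); case: (w p <= j).
rewrite (reindex_perm w^-1); under eq_bigr do rewrite permKV.
by rewrite count_le geq_minl.
Qed.

(* Summing over all corners counts each point p of the graph of w once for
   every corner (i, j) to its north-east. *)
Lemma total_corner_sum n (w : 'S_n) :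
  \sum_(i < n) \sum_(j < n) corner_sum w i j = \sum_(p < n) (n - p) * (n - w p).
Proof.
under eq_bigr do under eq_bigr do rewrite corner_sumE.
under eq_bigr do rewrite exchange_big.
rewrite exchange_big; apply: eq_bigr => p _.
rewrite -!count_ge big_distrl /=; apply: eq_bigr => i _.
rewrite big_distrr /=; apply: eq_bigr => j _.
by case: (p <= i); case: (w p <= j).
Qed.

Lemma beta_statE n (w : 'S_n) :
  beta_stat w + \sum_(p < n) p * (n - p) = \sum_(p < n) (n - p) * w p.
Proof.
have {1}-> : beta_stat w = \sum_(i < n) \sum_(j < n) corner_sum 1%g i j
                          - \sum_(i < n) \sum_(j < n) corner_sum w i j.
  by rewrite /beta_stat; under eq_bigr do under eq_bigr do rewrite -corner_sum1.
have le_sums : \sum_(i < n) \sum_(j < n) corner_sum w i j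
               <= \sum_(i < n) \sum_(j < n) corner_sum 1%g i j.
  by apply: leq_sum => i _; apply: leq_sum => j _; apply: corner_sum_le.
have id_split : \sum_(p < n) (n - p) * (n - (1%g : 'S_n) p) + \sum_(p < n) p * (n - p)
                = \sum_(p < n) n * (n - p).
  rewrite -big_split /=; apply: eq_bigr => p _; rewrite perm1.
  by have := ltn_ord p; nia.
have w_split : \sum_(p < n) (n - p) * (n - w p) + \sum_(p < n) (n - p) * w p
               = \sum_(p < n) n * (n - p).
  rewrite -big_split /=; apply: eq_bigr => p _; have := ltn_ord (w p); nia.
by move: le_sums id_split w_split; rewrite !total_corner_sum; lia.
Qed.

Local Open Scope ring_scope.

Lemma prod_diffs_sign (R : realDomainType) n (x : 'I_n -> R) :
  \prod_(i < n) \prod_(j < n | (i < j)%N) (x j - x i) =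
  (-1) ^+ #|[set p : 'I_n * 'I_n | (p.1 < p.2)%N && (x p.2 < x p.1)]|
  * `|\prod_(i < n) \prod_(j < n | (i < j)%N) (x j - x i)|.
Proof.
rewrite normr_prod; under [in RHS]eq_bigr do rewrite normr_prod.
rewrite !pair_big_dep /=.
under eq_bigr => p _ do rewrite [x p.2 - x p.1]numEsign subr_lt0.
rewrite big_split /= prodrXr; congr (_ ^+ _ * _).
rewrite cardsE -sum1_card [RHS]big_mkcond [LHS]big_mkcond.
by apply: eq_bigr => -[a b] _ /=; rewrite unfold_in /=; case: (a < b)%N; case: (x b < x a).
Qed.

Lemma inv_numE n (w : 'S_n) :
  inv_num w =
  #|[set p : 'I_n * 'I_n | (p.1 < p.2)%N && ((w p.2 : nat)%:R < (w p.1 : nat)%:R :> int)]|.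
Proof. by apply: eq_card => p; rewrite !inE ltr_nat. Qed.

Lemma inv_num1 n : inv_num (1%g : 'S_n) = 0%N.
Proof.
apply/eqP; rewrite cards_eq0; apply/eqP/setP => -[a b].
by rewrite !inE !perm1 /=; case: ltngtP.
Qed.

Definition perm_row n (s : 'S_n) : 'rV[int]_n := \row_j (s j : nat)%:R.

(* Compare the Vandermonde
   determinants V(w) at x_j = w(j) and V(1) at x_j = j: V(w) = (-1)^w V(1)
   by permuting columns, V(s) = (-1)^l(s) |V(s)| by the lemma above, and
   V(1) is nonzero. *)
Lemma inv_num_sign n (w : 'S_n) : (-1) ^+ inv_num w = (-1) ^+ w :> int.
Proof.
pose V (s : 'S_n) := \det (Vandermonde n (perm_row s)).
have signV s : V s = (-1) ^+ inv_num s * `|V s|.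
  rewrite /V det_Vandermonde inv_numE.
  under eq_bigr do under eq_bigr do rewrite !mxE.
  exact: prod_diffs_sign.
have permV : V w = (-1) ^+ w * V 1%g.
  rewrite /V; have -> : Vandermonde n (perm_row w)
                        = col_perm w (Vandermonde n (perm_row 1%g)).
    by apply/matrixP => i j; rewrite !mxE perm1.
  by rewrite col_permE det_mulmx det_perm odd_permV mulrC.
have V1_neq0 : `|V 1%g| != 0.
  rewrite normr_eq0 /V det_Vandermonde; apply/prodf_neq0 => i _.
  apply/prodf_neq0 => j lt_ij; rewrite !mxE !perm1 subr_eq0 eqr_nat.
  by rewrite neq_ltn lt_ij orbT.
have normV : `|V w| = `|V 1%g| by rewrite permV normrM normr_sign mul1r.
apply: (mulIf V1_neq0).
by rewrite -{1}normV -signV permV {1}(signV 1%g) inv_num1 expr0 mul1r.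
Qed.

Section TriangularProducts.
Variable R : comPzSemiRingType.

Lemma prod_pairs_lt n (G : nat -> nat -> R) :
  \prod_(i < n) \prod_(j < n | (i < j)%N) G i j
  = \prod_(0 <= j < n) \prod_(0 <= i < j) G i j.
Proof.
rewrite big_mkord (exchange_big_dep xpredT) //=; apply: eq_bigr => j _.
by rewrite (big_ord_narrow (ltnW (ltn_ord j))) big_mkord.
Qed.

Lemma prod_triangle (F : nat -> R) n :
  \prod_(0 <= j < n) \prod_(0 <= i < j) F (j - i)%N
  = \prod_(1 <= k < n) F k ^+ (n - k).
Proof.
elim: n => [|n IHn]; first by rewrite !big_geq.
have diag : \prod_(0 <= i < n) F (n - i)%N = \prod_(1 <= k < n.+1) F k.
  rewrite big_nat_rev big_add1 /=; apply: eq_big_nat => i /andP[_ lt_in].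
  by congr F; lia.
have drop_last : \prod_(1 <= k < n) F k ^+ (n - k) = \prod_(1 <= k < n.+1) F k ^+ (n - k).
  case: n {IHn diag} => [|m]; first by rewrite !big_geq.
  by rewrite [RHS]big_nat_recr //= subnn expr0 mulr1.
rewrite big_nat_recr //= IHn diag drop_last -big_split /=.
by apply: eq_big_nat => k /andP[_ lt_kn]; rewrite -exprSr; congr (_ ^+ _); lia.
Qed.

End TriangularProducts.

Lemma det_Vandermonde_expand (R : comPzRingType) n (y : 'rV[R]_n) :
  \det (Vandermonde n y) = \sum_(s : 'S_n) (-1) ^+ s * \prod_(i < n) y 0 i ^+ s i.
Proof.
rewrite -det_tr; apply: eq_bigr => s _; congr (_ * _).
by apply: eq_bigr => i _; rewrite !mxE.
Qed.

(* The Vandermonde determinant at the points x^(n-1), ..., x, 1: each factor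
   x^(n-j) - x^(n-i) splits as x^(n-j) (1 - x^(j-i)). *)
Lemma det_Vandermonde_powers (R : comPzRingType) n (x : R) :
  \det (Vandermonde n (\row_j x ^+ (n - j))) =
  x ^+ (\sum_(p < n) p * (n - p)) * \prod_(1 <= k < n) (1 - x ^+ k) ^+ (n - k).
Proof.
rewrite det_Vandermonde.
rewrite (eq_bigr (fun i : 'I_n =>
  \prod_(j < n | (i < j)%N) (x ^+ (n - j) * (1 - x ^+ (j - i))))); last first.
  move=> i _; apply: eq_bigr => j lt_ij; rewrite !mxE mulrBr mulr1 -exprD.
  by congr (_ - x ^+ _); have := ltn_ord j; lia.
rewrite (@prod_pairs_lt _ n (fun i j => x ^+ (n - j) * (1 - x ^+ (j - i)))).
under eq_bigr do rewrite big_split.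
rewrite big_split /= (prod_triangle (fun k => 1 - x ^+ k)); congr (_ * _).
under eq_bigr do rewrite prodr_const_nat -exprM.
by rewrite prodrXr big_mkord; congr (_ ^+ _); apply: eq_bigr => j _; rewrite subn0 mulnC.
Qed.

(* Multiply by q^D: both sides become the Vandermonde determinant at powers
   of q, the left one through its Leibniz expansion. *)
Theorem theorem5p3 (n : nat) (hn : (1 <= n)%N) :
  \sum_(w : 'S_n) (-1) ^+ inv_num w *: ('X ^+ beta_stat w : {poly int})
  = \prod_(1 <= k < n) (1 - 'X ^+ k) ^+ (n - k).
Proof.
set D := (\sum_(p < n) p * (n - p))%N.
have XD_neq0 : ('X ^+ D : {poly int}) != 0 by rewrite expf_neq0 ?polyX_eq0.
apply: (mulfI XD_neq0).
rewrite -det_Vandermonde_powers det_Vandermonde_expand mulr_sumr.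
apply: eq_bigr => w _.
rewrite -scalerAr -exprD addnC beta_statE inv_num_sign -mul_polyC rmorph_sign.
congr (_ * _); rewrite -prodrXr; apply: eq_bigr => i _.
by rewrite mxE -exprM.
Qed.
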